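(* Let $f:\mathbb{R}^n\to\mathbb{R}$ be differentiable with $L_f$-Lipschitz continuous gradient, let $g:\mathbb{R}^n\to\mathbb{R}\cup\{+\infty\}$ be proper, lower semicontinuous, $\gamma_g$-prox-bounded and $\rho$-weakly convex, let $\varphi=f+g$ with $\operatorname{argmin}\varphi\neq\emptyset$. For the iterates generated by the PGCL algorithm described in the context: (i) $r^k\to0$ and $\sum_k\|r^k\|^2<\infty$, and $\omega((x^k))=\omega((\bar x^k))\subseteq\operatorname{fix}T_\gamma$; (ii) $(\varphi_\gamma(x^k))$ converges to a finite value $\varphi_\star$, and if $(x^k)$ is bounded then $(\varphi(\bar x^k))$ also converges to $\varphi_\star$.
   Context: $\omega(\cdot)$ denotes the set of limit points of a sequence; $\operatorname{fix}T_\gamma=\{x:x\in T_\gamma(x)\}$. $\gamma_g$-prox-bounded: $g+\frac1{2\gamma}\|\cdot\|^2$ bounded below for each $\gamma\in(0,\gamma_g)$; $\rho$-weakly convex: $g+\frac\rho2\|\cdot\|^2$ convex. $\operatorname{prox}_{\gamma g}(x)=\operatorname{argmin}_z\{g(z)+\frac1{2\gamma}\|z-x\|^2\}$, $T_\gamma(x)=\operatorname{prox}_{\gamma g}(x-\gamma\nabla f(x))$, $R_\gamma(x)=\gamma^{-1}(x-T_\gamma(x))$. Forward-backward envelope $\varphi_\gamma(x)=\inf_u\{f(x)+\langle\nabla f(x),u-x\rangle+g(u)+\frac1{2\gamma}\|u-x\|^2\}$. $\partial_C$: Clarke generalized Jacobian. PGCL: given $x^0$, $\gamma\in(0,\min\{1/L_f,\gamma_g\})$,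 $\sigma\in(0,\gamma\frac{1-\gamma L_f}{2})$, $\beta\in(0,1)$, $\mu\in(0,1)$; for $k=0,1,\dots$: select $\bar x^k\in T_\gamma(x^k)$, $r^k=\gamma^{-1}(x^k-\bar x^k)$; select $\bar r^k\in R_\gamma(\bar x^k)$, $Q_k\in I-\gamma\partial_C(\nabla f)(\bar x^k)$, $P_k\in\partial_C\operatorname{prox}_{\gamma g}(\bar x^k-\gamma\nabla f(\bar x^k))$; $B_k=\gamma^{-1}Q_k(I-P_kQ_k)$; stop if $\bar r^k=0$ and $\lambda_{\min}(B_k)\ge0$; select $d^k,s^k$ with $\langle Q_k\bar r^k,d^k\rangle\le0$, $\langle Q_k\bar r^k,s^k\rangle\le0$, and $\langle B_ks^k,s^k\rangle<0$ if $\lambda_{\min}(B_k)<0$, $=0$ otherwise; let $\tau_k$ be the largest element of $\{\beta^m:m\in\mathbb N\}$ such that $x^{k+1}=\bar x^k+\tau_k^2d^k+\tau_ks^k$ satisfies $\varphi_\gamma(x^{k+1})\le\varphi_\gamma(x^k)-\sigma\|r^k\|^2+\frac\mu2\tau_k^2\langle B_ks^k,s^k\rangle$. *)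

(* R^n is modelled as row vectors 'rV[R]_n
   over an arbitrary R : realType, with the EUCLIDEAN inner product / norm
   defined below (the library norm on matrices is the sup norm, which only
   matters for the topology, which is the same). *)
From HB Require Import structures.
From mathcomp Require Import all_boot all_order all_algebra.
From mathcomp Require Import all_classical all_reals all_analysis.
Set Implicit Arguments. Unset Strict Implicit. Unset Printing Implicit Defensive.
Import Order.TTheory GRing.Theory Num.Theory.
Import numFieldNormedType.Exports.
Local Open Scope classical_set_scope.
Local Open Scope ring_scope.

Section PGCL.
Variables (R : realType) (n : nat).
Local Notation V := 'rV[R]_n.
Local Notation M := 'M[R]_n.

Definition dotp (u v : V) : R := \sum_(i < n) u 0 i * v 0 i.
Definition enorm (u : V) : R := Num.sqrt (dotp u u).

(* action of a matrix A on a vector v (v viewed as a column): A v *)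
Definition mxapp (A : M) (v : V) : V := v *m A^T.

Definition grad (f : V -> R) (x : V) : V := \row_(i < n) ('d f x) (delta_mx 0 i).

(* Jacobian matrix of F : R^n -> R^n at y, so that mxapp (jac F y) v = 'd F y v *)
Definition jac (F : V -> V) (y : V) : M := (lin1_mx ('d F y))^T.

Definition mx_conv (S : set M) : set M :=
  [set A | exists (m : nat) (l : 'I_m -> R) (As : 'I_m -> M),
     (forall i, 0 <= l i) /\ \sum_(i < m) l i = 1 /\
     (forall i, S (As i)) /\ A = \sum_(i < m) l i *: As i].

Definition sv_diff_at (T : V -> set V) (y : V) (J : M) : Prop :=
  exists F : V -> V, (\forall z \near y, T z = [set F z]) /\
    differentiable F y /\ J = jac F y.

Definition clarke_jac (T : V -> set V) (x : V) : set M :=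
  mx_conv [set A | exists (xs : nat -> V) (Js : nat -> M),
     xs @ \oo --> x /\ (forall i, sv_diff_at T (xs i) (Js i)) /\ Js @ \oo --> A].

Definition clarke_jac_fun (F : V -> V) (x : V) : set M :=
  clarke_jac (fun y => [set F y]) x.

Definition lambda_min_neg (B : M) : Prop := exists a : R, eigenvalue B a /\ a < 0.

Definition proper_fun (g : V -> \bar R) : Prop :=
  (forall x, g x != -oo%E) /\ exists x, g x \is a fin_num.

Definition prox_bounded (g : V -> \bar R) (gg : \bar R) : Prop :=
  forall gam : R, 0 < gam -> (gam%:E < gg)%E ->
    exists c : R, forall x, (c%:E <= g x + (1 / (2 * gam) * dotp x x)%R%:E)%E.

Definition ext_convex (h : V -> \bar R) : Prop :=
  forall (x y : V) (t : R), 0 <= t <= 1 ->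
    (h (t *: x + (1 - t) *: y)%R <= t%:E * h x + (1 - t)%R%:E * h y)%E.

Definition weakly_convex (g : V -> \bar R) (rho : R) : Prop :=
  ext_convex (fun x => g x + (rho / 2 * dotp x x)%R%:E)%E.

Definition lipschitz_grad (f : V -> R) (Lf : R) : Prop :=
  forall x y, enorm (grad f x - grad f y) <= Lf * enorm (x - y).

Variables (f : V -> R) (g : V -> \bar R).

Definition phi (x : V) : \bar R := ((f x)%:E + g x)%E.

Definition prox (gam : R) (x : V) : set V :=
  [set z | forall u, (g z + (1 / (2 * gam) * dotp (z - x) (z - x))%R%:E
                      <= g u + (1 / (2 * gam) * dotp (u - x) (u - x))%R%:E)%E].

Definition Tg (gam : R) (x : V) : set V := prox gam (x - gam *: grad f x).

Definition Rg (gam : R) (x : V) : set V := [set gam^-1 *: (x - z) | z in Tg gam x].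

Definition fixT (gam : R) : set V := [set x | Tg gam x x].

Definition fbe (gam : R) (x : V) : \bar R :=
  ereal_inf [set ((f x + dotp (grad f x) (u - x))%R%:E + g u
                  + (1 / (2 * gam) * dotp (u - x) (u - x))%R%:E)%E | u in [set: V]].

Definition limpts (u : nat -> V) : set V :=
  [set p | exists s : nat -> nat, {homo s : a b / (a < b)%N} /\ (u \o s) @ \oo --> p].

(* The sequences (x^k), (xbar^k), (rbar^k), Q_k, P_k, d^k, s^k, tau_k are
   generated by PGCL with parameters gam, sigma, beta, mu (infinite run: the
   stopping test never fires). *)
Definition pgcl_run (gam sigma beta mu : R)
  (x xb rb d s : nat -> V) (Q P : nat -> M) (tau : nat -> R) : Prop :=
  forall k : nat,
  let r := gam^-1 *: (x k - xb k) in
  let B := gam^-1 *: (Q k *m (1%:M - P k *m Q k)) in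
  let ls (t : R) := (fbe gam (xb k + (t ^+ 2) *: d k + t *: s k)%R
        <= fbe gam (x k) - (sigma * dotp r r)%R%:E
           + (mu / 2 * t ^+ 2 * dotp (mxapp B (s k)) (s k))%R%:E)%E in
  Tg gam (x k) (xb k) /\ Rg gam (xb k) (rb k) /\
      (exists A, clarke_jac_fun (grad f) (xb k) A /\ Q k = 1%:M - gam *: A) /\
      clarke_jac (prox gam) (xb k - gam *: grad f (xb k)) (P k) /\
      not (rb k = 0 /\ not (lambda_min_neg B)) /\
      (dotp (mxapp (Q k) (rb k)) (d k) <= 0 /\ dotp (mxapp (Q k) (rb k)) (s k) <= 0) /\
      (lambda_min_neg B -> dotp (mxapp B (s k)) (s k) < 0) /\
      (not (lambda_min_neg B) -> dotp (mxapp B (s k)) (s k) = 0) /\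
      (exists m : nat, tau k = beta ^+ m /\ ls (tau k) /\
          forall m' : nat, ls (beta ^+ m') -> beta ^+ m' <= tau k) /\
      x k.+1 = xb k + (tau k ^+ 2) *: d k + tau k *: s k.

End PGCL.

From HB Require Import structures.
From mathcomp Require Import all_boot all_order all_algebra.
From mathcomp Require Import all_classical all_reals all_analysis.
From mathcomp Require Import ring lra.
Import Order.TTheory GRing.Theory Num.Theory.
Import numFieldNormedType.Exports.
Local Open Scope classical_set_scope.
Local Open Scope ring_scope.

(* If xb is a proximal point of the forward step at x, the forward-backward
   envelope equals phi(xb) + gap(x, xb), where
   gap(x, u) = |u - x|^2 / (2 gam) - (f u - f x - <grad f x, u - x>).
   By the descent lemma and gam Lf < 1 this gap lies between 0 and
   (Lf/2 + 1/(2 gam)) |u - x|^2.  The accepted line search gives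
   fbe(x^{k+1}) <= fbe(x^k) - sigma |r^k|^2, and fbe >= min phi, so fbe(x^k)
   decreases to a finite limit and sum_k |r^k|^2 < oo.  Hence x^k - xb^k -> 0:
   both sequences have the same limit points, which are fixed points of T_gam
   because T_gam has a closed graph (g lsc, grad f continuous), and
   phi(xb^k) = fbe(x^k) - gap(x^k, xb^k) has the same limit as fbe(x^k). *)

Section Euclidean.
Context {R : realType} {n : nat}.
Implicit Types (u v w : 'rV[R]_n) (a : R).

Lemma dotpC u v : dotp u v = dotp v u.
Proof. by apply: eq_bigr => i _; rewrite mulrC. Qed.

Lemma dotpDl u v w : dotp (u + v) w = dotp u w + dotp v w.
Proof. by rewrite /dotp -big_split; apply: eq_bigr => i _; rewrite mxE mulrDl. Qed.

Lemma dotpZl a u w : dotp (a *: u) w = a * dotp u w.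
Proof. by rewrite /dotp mulr_sumr; apply: eq_bigr => i _; rewrite mxE mulrA. Qed.

Lemma dotpNl u w : dotp (- u) w = - dotp u w.
Proof. by rewrite -scaleN1r dotpZl mulN1r. Qed.

Lemma dotpBl u v w : dotp (u - v) w = dotp u w - dotp v w.
Proof. by rewrite dotpDl dotpNl. Qed.

Lemma dotpDr u v w : dotp w (u + v) = dotp w u + dotp w v.
Proof. by rewrite dotpC dotpDl !(dotpC w). Qed.

Lemma dotpZr a u w : dotp w (a *: u) = a * dotp w u.
Proof. by rewrite dotpC dotpZl dotpC. Qed.

Lemma dotpNr u w : dotp w (- u) = - dotp w u.
Proof. by rewrite dotpC dotpNl dotpC. Qed.

Lemma dotpBr u v w : dotp w (u - v) = dotp w u - dotp w v.
Proof. by rewrite dotpDr dotpNr. Qed.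

Lemma dotp0r w : dotp w 0 = 0.
Proof. by rewrite /dotp big1 // => i _; rewrite mxE mulr0. Qed.

Lemma dotp_ge0 u : 0 <= dotp u u.
Proof. by apply: sumr_ge0 => i _; rewrite -expr2 sqr_ge0. Qed.

Lemma dotp_eq0 u : (dotp u u == 0) = (u == 0).
Proof.
apply/idP/eqP => [|->]; last by rewrite dotp0r.
rewrite psumr_eq0 => [/allP u0|i _]; last by rewrite -expr2 sqr_ge0.
by apply/rowP => i; rewrite mxE; apply/eqP; rewrite -sqrf_eq0 expr2 (eqP (u0 i _)).
Qed.

Lemma enorm_ge0 u : 0 <= enorm u.
Proof. exact: sqrtr_ge0. Qed.

Lemma enorm_sqr u : enorm u ^+ 2 = dotp u u.
Proof. by rewrite sqr_sqrtr // dotp_ge0. Qed.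

Lemma dotp_sqr_le u v : dotp u v ^+ 2 <= dotp u u * dotp v v.
Proof.
have [->|v0] := eqVneq v 0; first by rewrite !dotp0r expr0n /= mulr0.
have vv_gt0 : 0 < dotp v v by rewrite lt_def dotp_eq0 v0 dotp_ge0.
set w := dotp v v *: u - dotp u v *: v.
have ww : dotp w w = dotp v v * (dotp u u * dotp v v - dotp u v ^+ 2).
  by rewrite !(dotpBl, dotpBr, dotpZl, dotpZr) (dotpC v u); ring.
by have := dotp_ge0 w; rewrite ww pmulr_rge0 // subr_ge0.
Qed.

Lemma normr_dotp_le u v : `|dotp u v| <= enorm u * enorm v.
Proof.
rewrite -sqrtr_sqr -sqrtrM ?dotp_ge0 // ler_sqrt ?mulr_ge0 ?dotp_ge0 //.
exact: dotp_sqr_le.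
Qed.

Lemma enormZ a u : enorm (a *: u) = `|a| * enorm u.
Proof.
by rewrite /enorm dotpZl dotpZr mulrA -expr2 sqrtrM ?sqr_ge0 // sqrtr_sqr.
Qed.

Lemma sqr_mx_norm_le_dotp u : `|u| ^+ 2 <= dotp u u.
Proof.
rewrite [`|u|]mx_normrE; elim/big_ind: _ => //.
- by rewrite expr0n dotp_ge0.
- by move=> a b ? ?; rewrite /Num.max; case: ifP.
move=> [i j] _ /=; rewrite real_normK ?num_real // (ord1 i).
by rewrite /dotp (bigD1 j) //= -expr2 lerDl; apply: sumr_ge0 => k _; rewrite -expr2 sqr_ge0.
Qed.

Lemma dotp_le_sqr_mx_norm u : dotp u u <= n%:R * `|u| ^+ 2.
Proof.
rewrite mulr_natl -[n in _ *+ n]card_ord -sumr_const; apply: ler_sum => i _.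
rewrite -expr2 -real_normK ?num_real // lerXn2r ?nnegrE // [`|u|]mx_normrE.
exact: (le_bigmax _ (fun ij : 'I_1 * 'I_n => `|u ij.1 ij.2|) (0, i)).
Qed.

Lemma cvg_dotpP {T : Type} (F : set_system T) {FF : Filter F}
    (u : T -> 'rV[R]_n) (p : 'rV[R]_n) :
  u @ F --> p <-> (fun t => dotp (u t - p) (u t - p)) @ F --> (0 : R).
Proof.
rewrite -(subr_cvg0 u); set v := fun t => u t - p; split => [v0|d0].
  have nv0 : (fun t => n%:R * (`|v t| * `|v t|)) @ F --> (0 : R).
    have nv : `|v t| @[t --> F] --> (0 : R) by have := cvg_norm v0; rewrite normr0; apply.
    by have := cvgMl_tmp (a := n%:R) (cvgM nv nv); rewrite mulr0 mulr0; apply.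
  apply: (squeeze_cvgr _ (cvg_cst 0) nv0).
  by near=> t; rewrite dotp_ge0 -expr2 dotp_le_sqr_mx_norm.
apply/cvgr0Pnorm_lt => e e0; near=> t.
rewrite -(@ltr_pXn2r _ 2) ?nnegrE ?(ltW e0) //.
apply: le_lt_trans (sqr_mx_norm_le_dotp _) _; rewrite -[dotp _ _]ger0_norm ?dotp_ge0 //.
by near: t; apply: cvgr0_norm_lt d0 _ _; rewrite exprn_gt0.
Unshelve. all: by end_near.
Qed.

Lemma dotp_continuous : continuous (fun u : 'rV[R]_n => dotp u u).
Proof.
move=> u; apply: differentiable_continuous.
rewrite (_ : (fun v => dotp v v) = \sum_(i < n) fun v : 'rV[R]_n => v 0 i * v 0 i).
  by apply: differentiable_sum => i; apply: differentiableM; exact: differentiable_coord.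
by apply: funext => v; rewrite fct_sumE.
Qed.

Lemma cvg_series_dotp_cvg0 (u : nat -> 'rV[R]_n) :
  cvgn (series (fun k => dotp (u k) (u k))) -> u @ \oo --> (0 : 'rV[R]_n).
Proof.
move=> /cvg_series_cvg_0 u_cvg; apply/(cvg_dotpP \oo).
by under eq_fun do rewrite subr0.
Qed.

End Euclidean.

Section RealIncrement.
Context {R : realType}.

Lemma increment_le_of_derive (h dh : R -> R) (c K : R) :
  (forall t : R, is_derive t (1 : R) h (dh t)) ->
  (forall t, 0 < t < 1 -> dh t - c <= 2 * K * t) ->
  h 1 - h 0 - c <= K.
Proof.
move=> hd dh_le.
pose k := h - ( *%R ^~ c) - (fun t => K * t ^+ 2).
have kd t : is_derive t (1 : R) k (dh t - c - K * (2 * t)).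
  apply: is_derive_eq.
  by rewrite scaler0 add0r [c%:A]mulr1 [t%:A]mulr1 -[K *: _]/(K * _); ring.
have : k 1 <= k 0.
  apply: (@ler0_derive1_le_cc _ k 0 1); rewrite ?in_itv /= ?lexx ?ler01 //.
  - move=> t; rewrite in_itv /= => t01.
    by rewrite derive1E (@derive_val _ _ _ _ _ _ _ (kd t)); have := dh_le t t01; lra.
  - by apply: derivable_within_continuous => t _; have [] := kd t.
by rewrite /k !fctE expr1n expr0n /= mulr0 mulr1 mul0r; lra.
Qed.

Lemma norm_increment_le_of_derive (h dh : R -> R) (c K : R) :
  (forall t : R, is_derive t (1 : R) h (dh t)) ->
  (forall t, 0 < t < 1 -> `|dh t - c| <= 2 * K * t) ->
  `|h 1 - h 0 - c| <= K.
Proof.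
move=> hd dh_le; rewrite ler_norml; apply/andP; split.
  suff : - h 1 - - h 0 - - c <= K by lra.
  apply: (@increment_le_of_derive (- h) (fun t => - dh t)) => t t01.
  by have := dh_le t t01; rewrite ler_norml => /andP[+ _]; lra.
apply: (@increment_le_of_derive h dh) => // t t01.
exact: le_trans (ler_norm _) (dh_le t t01).
Qed.

End RealIncrement.

Section Descent.
Context {R : realType} {n : nat} {f : 'rV[R]_n -> R}.
Hypothesis f_diff : forall y, differentiable f y.

Lemma diff_grad z v : 'd f z v = dotp (grad f z) v.
Proof.
rewrite {1}(row_sum_delta v) linear_sum /dotp; apply: eq_bigr => i _.
by rewrite linearZ /= /grad mxE mulrC.
Qed.

Lemma is_derive_along_line (x v : 'rV[R]_n) (t : R) :
  is_derive t (1 : R) (fun s : R => f (s *: v + x)) (dotp (grad f (t *: v + x)) v).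
Proof.
have line_diff s : is_diff s (fun s : R => s *: v + x) (( *:%R ^~ v) + 0).
  have -> : (fun s : R => s *: v + x) = ( *:%R ^~ v) + cst x by [].
  exact: is_diffD.
have comp_diff : differentiable (f \o (fun s : R => s *: v + x)) t.
  exact: differentiable_comp.
apply: DeriveDef; first exact: diff_derivable.
by rewrite deriveE // diff_comp //= derive.diff_val /= addr0 scale1r diff_grad.
Qed.

Lemma descent_lemma (L : R) (x y : 'rV[R]_n) : lipschitz_grad f L ->
  `|f y - f x - dotp (grad f x) (y - x)| <= L / 2 * dotp (y - x) (y - x).
Proof.
move=> f_lip; set v := y - x.
have := @norm_increment_le_of_derive _ _ _ (dotp (grad f x) v) (L / 2 * dotp v v)
  (is_derive_along_line x v).
rewrite /= scale1r scale0r add0r subrK; apply=> t /andP[t0 _].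
rewrite -dotpBl; apply: le_trans (normr_dotp_le _ _) _.
apply: le_trans (ler_wpM2r (enorm_ge0 v) (f_lip _ _)) _.
rewrite addrK enormZ (ger0_norm (ltW t0)) -enorm_sqr.
suff -> : 2 * (L / 2 * enorm v ^+ 2) * t = L * (t * enorm v) * enorm v by [].
by field.
Qed.

End Descent.

Definition fb_model {R : realType} {n : nat} (f : 'rV[R]_n -> R) (g : 'rV[R]_n -> \bar R)
    (gam : R) (x u : 'rV[R]_n) : \bar R :=
  ((f x + dotp (grad f x) (u - x))%:E + g u
   + (1 / (2 * gam) * dotp (u - x) (u - x))%:E)%E.

Definition fb_gap {R : realType} {n : nat} (f : 'rV[R]_n -> R) (gam : R) (x u : 'rV[R]_n) : R :=
  1 / (2 * gam) * dotp (u - x) (u - x) - (f u - f x - dotp (grad f x) (u - x)).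

Section ForwardBackwardEnvelope.
Context {R : realType} {n : nat} {f : 'rV[R]_n -> R} {g : 'rV[R]_n -> \bar R} {gam : R}.
Hypotheses (f_diff : forall y, differentiable f y) (gam_gt0 : 0 < gam).
Implicit Types x u : 'rV[R]_n.

Lemma fb_modelE x u : fb_model f g gam x u = (phi f g u + (fb_gap f gam x u)%:E)%E.
Proof.
rewrite /fb_model /phi (addeC _ (g u)) (addeC (f u)%:E) -!addeA -!EFinD.
by congr (_ + _%:E)%E; rewrite /fb_gap; ring.
Qed.

Lemma fb_model_prox x u : fb_model f g gam x u =
  (g u + (1 / (2 * gam) * dotp (u - (x - gam *: grad f x)) (u - (x - gam *: grad f x)))%:E
   + (f x - gam / 2 * dotp (grad f x) (grad f x))%:E)%E.
Proof.
rewrite /fb_model (addeC _ (g u)) -!addeA -!EFinD; congr (_ + _%:E)%E.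
have -> : u - (x - gam *: grad f x) = (u - x) + gam *: grad f x.
  by rewrite opprB addrA addrAC.
move: (u - x) (grad f x) => d gr.
rewrite !(dotpDl, dotpDr, dotpZl, dotpZr) (dotpC d gr).
by field; rewrite gt_eqF.
Qed.

Lemma fbe_prox x xb : Tg f g gam x xb -> fbe f g gam x = fb_model f g gam x xb.
Proof.
move=> xbT; apply/eqP; rewrite eq_le; apply/andP; split.
  by apply: ereal_inf_lbound; exists xb.
apply/ereal_infP => _ [u _ <-].
by rewrite -/(fb_model f g gam x u) !fb_model_prox leeD2r // xbT.
Qed.

Lemma fbe_prox_phi x xb : Tg f g gam x xb ->
  fbe f g gam x = (phi f g xb + (fb_gap f gam x xb)%:E)%E.
Proof. by move=> xbT; rewrite (fbe_prox _ _ xbT) fb_modelE. Qed.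

Lemma fb_gap_ge0 (L : R) x u : lipschitz_grad f L -> L / 2 <= 1 / (2 * gam) ->
  0 <= fb_gap f gam x u.
Proof.
move=> f_lip Lgam; have := descent_lemma f_diff L x u f_lip.
have := ler_wpM2r (dotp_ge0 (u - x)) Lgam.
by rewrite /fb_gap ler_norml => ? /andP[_ ?]; lra.
Qed.

Lemma norm_fb_gap_le (L : R) x u : lipschitz_grad f L ->
  `|fb_gap f gam x u| <= (L / 2 + 1 / (2 * gam)) * dotp (u - x) (u - x).
Proof.
move=> f_lip; have := descent_lemma f_diff L x u f_lip.
have : 0 <= 1 / (2 * gam) * dotp (u - x) (u - x).
  by rewrite mulr_ge0 ?dotp_ge0 // divr_ge0 // mulr_ge0 // ltW.
by rewrite /fb_gap !ler_norml => ? /andP[? ?]; apply/andP; split; lra.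
Qed.

Lemma fb_gap_cvg0 {L : R} {T : Type} (F : set_system T) {FF : Filter F}
    {y z : T -> 'rV[R]_n} :
  lipschitz_grad f L -> (fun t => y t - z t) @ F --> (0 : 'rV[R]_n) ->
  (fun t => fb_gap f gam (y t) (z t)) @ F --> (0 : R).
Proof.
move=> f_lip yz_cvg; set K := L / 2 + 1 / (2 * gam).
have bound_cvg : (fun t => K * dotp (y t - z t - 0) (y t - z t - 0)) @ F --> (0 : R).
  by have := cvgMl_tmp (a := K) ((cvg_dotpP F _ _).1 yz_cvg); rewrite mulr0; apply.
apply: norm_cvg0; apply: (squeeze_cvgr _ (cvg_cst 0) bound_cvg).
near=> t; rewrite normr_ge0 subr0 -opprB dotpNl dotpNr opprK.
exact: norm_fb_gap_le.
Unshelve. all: by end_near.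
Qed.

Lemma fbe_ge_min (L : R) xs x : lipschitz_grad f L -> L / 2 <= 1 / (2 * gam) ->
  (forall y, (phi f g xs <= phi f g y)%E) -> (phi f g xs <= fbe f g gam x)%E.
Proof.
move=> f_lip Lgam xs_min; apply/ereal_infP => _ [u _ <-].
rewrite -/(fb_model f g gam x u) fb_modelE; apply: le_trans (xs_min u) _.
by apply: leeDl; rewrite lee_fin (fb_gap_ge0 _ _ _ f_lip Lgam).
Qed.

End ForwardBackwardEnvelope.

Lemma lower_semicontinuous_cvg_le {X : topologicalType} {R : realType}
    (h : X -> \bar R) {T : Type} (F : set_system T) {PF : ProperFilter F}
    {z : T -> X} {a : T -> R} {z0 : X} {a0 : R} :
  lower_semicontinuous h -> z @ F --> z0 -> a @ F --> a0 ->
  (forall t, (h (z t) <= (a t)%:E)%E) -> (h z0 <= a0%:E)%E.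
Proof.
move=> h_lsc z_cvg a_cvg h_le; apply/lee_addgt0Pr => e e0.
rewrite leNgt -EFinD; apply/negP => /h_lsc[V V_z0 hV].
have near_z : \forall t \near F, V (z t) := z_cvg V V_z0.
have near_a : \forall t \near F, a t < a0 + e by apply: cvgr_lt a_cvg _ _; rewrite ltrDl.
have [t [/hV ht a_lt]] := filter_ex (filterI near_z near_a).
by have := lt_le_trans ht (h_le t); rewrite lte_fin; lra.
Qed.

Lemma lipschitz_grad_continuous {R : realType} {n : nat} {f : 'rV[R]_n -> R} {L : R} :
  lipschitz_grad f L -> continuous (grad f).
Proof.
move=> f_lip y; apply/(cvg_dotpP (nbhs y)).
have y_cvg : (fun z => L ^+ 2 * dotp (z - y) (z - y)) @ y --> (0 : R).
  have := cvgMl_tmp (a := L ^+ 2) ((cvg_dotpP (nbhs y) id y).1 cvg_id).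
  by rewrite mulr0; apply.
apply: (squeeze_cvgr _ (cvg_cst 0) y_cvg); near=> z; rewrite dotp_ge0 /=.
have Lz_ge0 : 0 <= L * enorm (z - y) := le_trans (enorm_ge0 _) (f_lip z y).
by rewrite -!enorm_sqr -exprMn lerXn2r ?nnegrE ?enorm_ge0 //; exact: f_lip.
Unshelve. all: by end_near.
Qed.

Lemma prox_fin_num {R : realType} {n : nat} {g : 'rV[R]_n -> \bar R} {gam : R}
    {w z : 'rV[R]_n} :
  proper_fun g -> prox g gam w z -> g z \is a fin_num.
Proof.
move=> [g_nNy [u gu_fin]] z_prox; rewrite fin_numE g_nNy /=; apply/eqP => gz.
by have := z_prox u; rewrite gz addye // -(fineK gu_fin) -EFinD leye_eq.
Qed.

Section ClosedGraph.
Context {R : realType} {n : nat} {f : 'rV[R]_n -> R} {g : 'rV[R]_n -> \bar R} {gam : R}.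
Hypotheses (g_lsc : lower_semicontinuous g) (g_nNy : forall x, g x != -oo%E).
Context {T : Type} {F : set_system T} {PF : ProperFilter F}.

Lemma prox_closed_graph {w z : T -> 'rV[R]_n} {w0 z0 : 'rV[R]_n} :
  w @ F --> w0 -> z @ F --> z0 -> (forall t, prox g gam (w t) (z t)) ->
  prox g gam w0 z0.
Proof.
move=> w_cvg z_cvg z_prox u; set c := 1 / (2 * gam).
have sqr_cvg (v : T -> 'rV[R]_n) v0 :
    v @ F --> v0 -> (fun t => c * dotp (v t) (v t)) @ F --> c * dotp v0 v0.
  by move=> v_cvg; apply: cvgMl_tmp; exact: continuous_cvg (dotp_continuous _) v_cvg.
case gu : (g u) => [G | | ]; last by have := g_nNy u; rewrite gu.
- rewrite -EFinD -leeBrDr // -EFinB.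
  apply: (@lower_semicontinuous_cvg_le _ _ g _ F PF z
    (fun t => G + c * dotp (u - w t) (u - w t) - c * dotp (z t - w t) (z t - w t))) => //.
  + apply: cvgB; [apply: cvgD; [exact: cvg_cst |] | by apply: sqr_cvg; apply: cvgB].
    by apply: sqr_cvg; apply: cvgB => //; exact: cvg_cst.
  + by move=> t; rewrite EFinB leeBrDr // EFinD -gu; exact: z_prox.
- by rewrite addye // leey.
Qed.

Lemma Tg_closed_graph {y z : T -> 'rV[R]_n} {y0 z0 : 'rV[R]_n} :
  continuous (grad f) -> y @ F --> y0 -> z @ F --> z0 ->
  (forall t, Tg f g gam (y t) (z t)) -> Tg f g gam y0 z0.
Proof.
move=> grad_cont y_cvg; apply: prox_closed_graph.
by apply: cvgB => //; apply: cvgZl_tmp; exact: continuous_cvg (grad_cont _) y_cvg.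
Qed.

End ClosedGraph.

Lemma cvg_subseq {T : topologicalType} (u : nat -> T) (l : T) (s : nat -> nat) :
  {homo s : a b / (a < b)%N} -> u @ \oo --> l -> (u \o s) @ \oo --> l.
Proof.
move=> s_incr u_cvg; apply: cvg_comp u_cvg; apply/cvgnyPge => N; exists N => // k /= Nk.
apply: leq_trans Nk _; elim: k => // k IH; exact: leq_ltn_trans IH (s_incr _ _ (ltnSn k)).
Qed.

Lemma subr_cvg0_cvg {K : numFieldType} {V : normedModType K} {T : Type}
    (F : set_system T) {FF : Filter F} (u v : T -> V) (p : V) :
  (fun t => u t - v t) @ F --> 0 -> u @ F --> p -> v @ F --> p.
Proof.
move=> uv0 u_cvg; rewrite -(subr0 p).
have -> : v = (fun t => u t - (u t - v t)) by apply: funext => t; rewrite subKr.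
exact: cvgB.
Qed.

Section LimitPoints.
Context {R : realType} {n : nat}.
Implicit Types u v : nat -> 'rV[R]_n.

Lemma limpts_subr_cvg0 u v :
  (fun k => u k - v k) @ \oo --> (0 : 'rV[R]_n) -> limpts u = limpts v.
Proof.
have sub (u' v' : nat -> 'rV[R]_n) :
    (fun k => u' k - v' k) @ \oo --> (0 : 'rV[R]_n) -> limpts u' `<=` limpts v'.
  move=> d0 p [s [s_incr us_cvg]]; exists s; split => //.
  by apply: subr_cvg0_cvg us_cvg; exact: (cvg_subseq (fun k => u' k - v' k)).
move=> d0; apply/seteqP; split; apply: sub => //.
by rewrite -oppr0; under eq_fun do rewrite -opprB; exact: cvgN.
Qed.

Lemma limpts_sub_fixT {f : 'rV[R]_n -> R} {g : 'rV[R]_n -> \bar R} {gam : R} {u v} :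
  continuous (grad f) -> lower_semicontinuous g -> (forall x, g x != -oo%E) ->
  (fun k => u k - v k) @ \oo --> (0 : 'rV[R]_n) -> (forall k, Tg f g gam (u k) (v k)) ->
  limpts u `<=` fixT f g gam.
Proof.
move=> grad_cont g_lsc g_nNy d0 vT p [s [s_incr us_cvg]]; rewrite /fixT /=.
apply: (Tg_closed_graph g_lsc g_nNy grad_cont us_cvg) => [|k]; last exact: vT.
by apply: subr_cvg0_cvg us_cvg; exact: (cvg_subseq (fun k => u k - v k)).
Qed.

End LimitPoints.

Lemma sufficient_decrease_cvg {R : realType} {F a : R ^nat} {sigma m : R} :
  0 < sigma -> (forall k, 0 <= a k) -> (forall k, F k.+1 <= F k - sigma * a k) ->
  (forall k, m <= F k) -> cvgn (series a) /\ cvgn F.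
Proof.
move=> sigma_gt0 a_ge0 F_dec F_ge; split.
  apply: nondecreasing_is_cvgn; first by apply: nondecreasing_series => k _ _.
  exists ((F 0%N - m) / sigma) => _ [N _ <-]; rewrite ler_pdivlMr // mulrC.
  suff : sigma * series a N <= F 0%N - F N by have := F_ge N; lra.
  elim: N => [|N IH]; first by rewrite /series /= big_geq // mulr0 subrr.
  by rewrite /series /= big_nat_recr //= mulrDr; have := F_dec N; rewrite /series /= in IH; lra.
apply: nonincreasing_is_cvgn; last by exists m => _ [k _ <-].
apply/nonincreasing_seqP => k; have := F_dec k; have := mulr_ge0 (ltW sigma_gt0) (a_ge0 k).
lra.
Qed.

Section PGCL.
Context {R : realType} {n : nat} {f : 'rV[R]_n -> R} {g : 'rV[R]_n -> \bar R}.
Context {Lf gam sigma beta mu : R} {x xb rb d s : nat -> 'rV[R]_n} {Q P : nat -> 'M[R]_n}.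
Context {tau : nat -> R}.
Hypotheses (run : pgcl_run f g gam sigma beta mu x xb rb d s Q P tau) (mu_ge0 : 0 <= mu).
Local Notation r k := (gam^-1 *: (x k - xb k)).

Lemma pgcl_Tg k : Tg f g gam (x k) (xb k).
Proof. by case: (run k). Qed.

Lemma pgcl_fbe_decrease k :
  (fbe f g gam (x k.+1) <= fbe f g gam (x k) - (sigma * dotp (r k) (r k))%:E)%E.
Proof.
have := run k; cbv zeta.
move=> [_ [_ [_ [_ [_ [_ [Bneg [Bzero [[m [_ [linesearch _]]] ->]]]]]]]]].
apply: le_trans linesearch _; apply: geeDl; rewrite lee_fin.
(* the curvature term is nonpositive by the choice of s^k *)
apply: mulr_ge0_le0; first by rewrite mulr_ge0 ?sqr_ge0 ?divr_ge0.
set B := gam^-1 *: (Q k *m (1%:M - P k *m Q k)).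
by case: (pselect (lambda_min_neg B)) => [/Bneg/ltW|/Bzero->].
Qed.

Hypotheses (g_proper : proper_fun g) (gam_gt0 : 0 < gam).

Lemma pgcl_phi_fin_num k : phi f g (xb k) \is a fin_num.
Proof. by rewrite fin_numD /= (prox_fin_num g_proper (pgcl_Tg k)). Qed.

Lemma pgcl_phiE k :
  phi f g (xb k) = (fine (fbe f g gam (x k)) - fb_gap f gam (x k) (xb k))%:E.
Proof.
by rewrite (fbe_prox_phi gam_gt0 _ _ (pgcl_Tg k)) -(fineK (pgcl_phi_fin_num k)) addrK.
Qed.

Lemma pgcl_fbe_fin_num k : fbe f g gam (x k) \is a fin_num.
Proof. by rewrite (fbe_prox_phi gam_gt0 _ _ (pgcl_Tg k)) fin_numD pgcl_phi_fin_num. Qed.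

Hypotheses (f_diff : forall y, differentiable f y) (f_lip : lipschitz_grad f Lf).
Hypotheses (Lf_gam : Lf / 2 <= 1 / (2 * gam)) (sigma_gt0 : 0 < sigma).
Context {xs : 'rV[R]_n}.
Hypothesis xs_min : forall y, (phi f g xs <= phi f g y)%E.

Lemma pgcl_descent_cvg :
  cvgn (series (fun k => dotp (r k) (r k))) /\ cvgn (fun k => fine (fbe f g gam (x k))).
Proof.
have fbeE k := fineK (pgcl_fbe_fin_num k).
have min_le k : (phi f g xs <= fbe f g gam (x k))%E :=
  fbe_ge_min f_diff _ _ _ f_lip Lf_gam xs_min.
have xs_fin : phi f g xs \is a fin_num.
  rewrite fin_numE; apply/andP; split; first by rewrite /phi; case: (g xs) (g_proper.1 xs).
  by have := min_le 0%N; rewrite -fbeE; case: (phi f g xs).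
apply: (sufficient_decrease_cvg (m := fine (phi f g xs)) sigma_gt0) => [k|k|k].
- exact: dotp_ge0.
- by rewrite -lee_fin EFinB !fbeE; exact: pgcl_fbe_decrease.
- by rewrite -lee_fin fbeE fineK.
Qed.

End PGCL.

Theorem proposition5p2 (R : realType) (n : nat)
  (f : 'rV[R]_n -> R) (g : 'rV[R]_n -> \bar R)
  (Lf : R) (gg : \bar R) (rho : R)
  (gam sigma beta mu : R)
  (x xb rb d s : nat -> 'rV[R]_n) (Q P : nat -> 'M[R]_n) (tau : nat -> R) :
  (forall y, differentiable f y) -> 0 < Lf -> lipschitz_grad f Lf ->
  proper_fun g -> lower_semicontinuous g -> (0 < gg)%E -> prox_bounded g gg ->
  0 <= rho -> weakly_convex g rho ->
  (exists xs, forall y, (phi f g xs <= phi f g y)%E) ->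
  0 < gam -> gam < 1 / Lf -> (gam%:E < gg)%E ->
  0 < sigma -> sigma < gam * (1 - gam * Lf) / 2 ->
  0 < beta < 1 -> 0 < mu < 1 ->
  pgcl_run f g gam sigma beta mu x xb rb d s Q P tau ->
  let r : nat -> 'rV[R]_n := fun k => gam^-1 *: (x k - xb k) in
  (* (i) *)
  (r @ \oo --> (0 : 'rV[R]_n)
   /\ cvgn (series (fun k => dotp (r k) (r k)))
   /\ limpts x = limpts xb /\ limpts x `<=` fixT f g gam)
  /\
  (* (ii) *)
  (exists phistar : R,
     (fun k => fbe f g gam (x k)) @ \oo --> phistar%:E /\
     ((exists Mb : R, forall k, enorm (x k) <= Mb) ->
        (fun k => phi f g (xb k)) @ \oo --> phistar%:E)).
Proof.
move=> f_diff Lf_gt0 f_lip g_proper g_lsc _ _ _ _ [xs xs_min] gam_gt0 gam_lt _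
  sigma_gt0 _ _ /andP[mu_gt0 _] run r.
have Lf_gam : Lf / 2 <= 1 / (2 * gam).
  rewrite ler_pdivlMr ?mulr_gt0 // (_ : Lf / 2 * (2 * gam) = gam * Lf); last by field.
  by apply: ltW; move: gam_lt; rewrite ltr_pdivlMr.
have [series_cvg fbe_cvg] :=
  pgcl_descent_cvg run (ltW mu_gt0) g_proper gam_gt0 f_diff f_lip Lf_gam sigma_gt0 xs_min.
have r_cvg := cvg_series_dotp_cvg0 r series_cvg.
have step_cvg : (fun k => x k - xb k) @ \oo --> (0 : 'rV[R]_n).
  have -> : (fun k => x k - xb k) = gam \*: r.
    by apply: funext => k; rewrite /r /= scalerKV // gt_eqF.
  by rewrite -(scaler0 _ gam); exact: cvgZl_tmp.
split.
  do 2!split=> //; split; first exact: limpts_subr_cvg0.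
  have grad_cont := lipschitz_grad_continuous f_lip.
  exact: limpts_sub_fixT grad_cont g_lsc g_proper.1 step_cvg (pgcl_Tg run).
exists (limn (fun k => fine (fbe f g gam (x k)))); split.
  under eq_fun do rewrite -(fineK (pgcl_fbe_fin_num run g_proper gam_gt0 _)).
  exact: cvg_comp fbe_cvg _.
move=> _; under eq_fun do rewrite (pgcl_phiE run g_proper gam_gt0).
have gap_cvg : (fun k => fb_gap f gam (x k) (xb k)) @ \oo --> (0 : R).
  by have := fb_gap_cvg0 f_diff gam_gt0 \oo f_lip step_cvg; apply.
by apply: cvg_comp (cvgB fbe_cvg gap_cvg) _; rewrite subr0.
Qed.
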